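(* In $\mathbf{AlgTh}$: every cosystem of Lawvere equations has a general cosolution; the Lawvere covarieties are precisely the morphisms of theories that are full and bijective on objects; and every Lawvere covariety is a coequalizer of some reflexive pair $P,Q$ forming a Lawvere equation.
   Context: An algebraic theory is a small category with finite products; $\mathbf{AlgTh}$ is the category of algebraic theories with finite-product-preserving functors (morphisms of theories). An equation $f\approx g$ is a pair of parallel morphisms. A cosystem of equations is a non-empty set of equations with a common codomain $A$; a cosolution is a morphism $a$ with domain $A$ such that $af=ag$ for all $f\approx g$ in it; a general cosolution is a cosolution $v$ such that every cosolution $a$ factors uniquely as $a=\tilde a v$. A Lawvere equation is a pair $P,Q:\mathcal{T}'\to\mathcal{T}$ of morphisms of theories such that there is a morphism of theories $U:\mathcal{T}''\to\mathcal{T}'$, surjective on objects, with $PU=QU$. A Lawvere covariety is a general cosolution of some cosystem of Lawvere equations. A pair $P,Q:\mathcal{T}'\to\mathcal{T}$ is reflexive if there is a morphism of theories $S:\mathcal{T}\to\mathcal{T}'$ with $PS=QS=1_{\mathcal{T}}$. *)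

Set Implicit Arguments.
Unset Strict Implicit.

Record Category := {
  Ob :> Type;
  Hom : Ob -> Ob -> Type;
  idm : forall A, Hom A A;
  comp : forall A B C, Hom B C -> Hom A B -> Hom A C;
  comp_id_l : forall A B (f : Hom A B), comp (idm B) f = f;
  comp_id_r : forall A B (f : Hom A B), comp f (idm A) = f;
  comp_assoc : forall A B C D (h : Hom C D) (g : Hom B C) (f : Hom A B),
      comp h (comp g f) = comp (comp h g) f
}.
Arguments idm {c} A.
Arguments comp {c A B C} _ _.

Definition is_terminal (C : Category) (t : C) : Prop :=
  forall X : C, exists f : Hom X t, forall g : Hom X t, g = f.

Definition is_product (C : Category) (a b p : C) (p1 : Hom p a) (p2 : Hom p b)
  : Prop :=
  forall (X : C) (f : Hom X a) (g : Hom X b),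
    exists h : Hom X p, comp p1 h = f /\ comp p2 h = g /\
      forall h' : Hom X p, comp p1 h' = f -> comp p2 h' = g -> h' = h.

Definition has_finite_products (C : Category) : Prop :=
  (exists t : C, is_terminal t) /\
  (forall a b : C, exists (p : C) (p1 : Hom p a) (p2 : Hom p b), is_product p1 p2).

Record Theory := {
  th_cat :> Category;
  th_fp : has_finite_products th_cat
}.

Record TMor (S T : Theory) := {
  fobj :> S -> T;
  fmap : forall A B : S, Hom A B -> Hom (fobj A) (fobj B);
  fmap_id : forall A : S, fmap (idm A) = idm (fobj A);
  fmap_comp : forall (A B C : S) (g : Hom B C) (f : Hom A B),
      fmap (comp g f) = comp (fmap g) (fmap f);
  pres_terminal : forall t : S, is_terminal t -> is_terminal (fobj t);
  pres_product : forall (a b p : S) (p1 : Hom p a) (p2 : Hom p b),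
      is_product p1 p2 -> is_product (fmap p1) (fmap p2)
}.
Arguments fmap {S T} _ {A B} _.

Definition tid (T : Theory) : TMor T T :=
  {| fobj := fun A => A; fmap := fun A B f => f;
     fmap_id := fun A => eq_refl; fmap_comp := fun A B C g f => eq_refl;
     pres_terminal := fun t H => H;
     pres_product := fun a b p p1 p2 H => H |}.

Program Definition tcomp (R S T : Theory) (G : TMor S T) (F : TMor R S)
  : TMor R T :=
  {| fobj := fun A => G (F A); fmap := fun A B f => fmap G (fmap F f) |}.
Next Obligation. intros; simpl; rewrite !fmap_id; reflexivity. Qed.
Next Obligation. intros; simpl; rewrite !fmap_comp; reflexivity. Qed.
Next Obligation. intros; simpl; apply pres_terminal, pres_terminal; assumption. Qed.
Next Obligation. intros; simpl; apply pres_product, pres_product; assumption. Qed.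

Record Cosystem (A : Theory) := {
  cs_index : Type;
  cs_nonempty : inhabited cs_index;
  cs_dom : cs_index -> Theory;
  cs_P : forall i, TMor (cs_dom i) A;
  cs_Q : forall i, TMor (cs_dom i) A
}.

Definition is_cosolution (A B : Theory) (E : Cosystem A) (a : TMor A B) : Prop :=
  forall i : cs_index E, tcomp a (cs_P i) = tcomp a (cs_Q i).

Definition is_general_cosolution (A V : Theory) (E : Cosystem A) (v : TMor A V)
  : Prop :=
  is_cosolution E v /\
  forall (B : Theory) (a : TMor A B), is_cosolution E a ->
    exists at_ : TMor V B, tcomp at_ v = a /\
      forall b : TMor V B, tcomp b v = a -> b = at_.

Definition surjective_on_objects (S T : Theory) (U : TMor S T) : Prop :=
  forall y : T, exists x : S, U x = y.

Definition bijective_on_objects (S T : Theory) (U : TMor S T) : Prop :=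
  (forall x y : S, U x = U y -> x = y) /\ surjective_on_objects U.

Definition full (S T : Theory) (U : TMor S T) : Prop :=
  forall (A B : S) (g : Hom (U A) (U B)), exists f : Hom A B, fmap U f = g.

Definition is_Lawvere_equation (T' T : Theory) (P Q : TMor T' T) : Prop :=
  exists (T'' : Theory) (U : TMor T'' T'),
    surjective_on_objects U /\ tcomp P U = tcomp Q U.

Definition is_Lawvere_cosystem (A : Theory) (E : Cosystem A) : Prop :=
  forall i : cs_index E, is_Lawvere_equation (cs_P i) (cs_Q i).

Definition is_Lawvere_covariety (T V : Theory) (v : TMor T V) : Prop :=
  exists E : Cosystem T, is_Lawvere_cosystem E /\ is_general_cosolution E v.

Definition is_reflexive_pair (T' T : Theory) (P Q : TMor T' T) : Prop :=
  exists S : TMor T T', tcomp P S = tid T /\ tcomp Q S = tid T.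

Definition is_coequalizer (T' T V : Theory) (P Q : TMor T' T) (v : TMor T V)
  : Prop :=
  tcomp v P = tcomp v Q /\
  forall (B : Theory) (a : TMor T B), tcomp a P = tcomp a Q ->
    exists at_ : TMor V B, tcomp at_ v = a /\
      forall b : TMor V B, tcomp b v = a -> b = at_.

(* A Lawvere equation P, Q : T' -> T agrees on objects (P and Q coincide after a
   surjective-on-objects U), so a cosystem of Lawvere equations only identifies
   parallel morphisms of T.  Its general cosolution is the quotient of T by the
   congruence generated by the pairs (P f, Q f), closed under composition and under
   uniqueness of maps into products; this quotient is full and bijective on objects,
   and every general cosolution is isomorphic to it.  Conversely, a full and
   bijective-on-objects v is the coequalizer of the two projections out of its
   kernel-pair theory, whose morphisms are the pairs (f, f') with v f = v f'; the
   diagonal splits both projections, which makes them a reflexive Lawvere equation. *)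
From Stdlib Require Import FunctionalExtensionality ProofIrrelevance PropExtensionality.
From Stdlib Require Import ClassicalEpsilon.
Set Implicit Arguments.
Unset Strict Implicit.

(* Morphisms packed with their endpoints, so that morphisms between objects that are
   only propositionally equal can be compared. *)
Definition Arr (C : Category) := {xy : Ob C * Ob C & Hom (fst xy) (snd xy)}.
Definition arr (C : Category) (X Y : C) (f : Hom X Y) : Arr C :=
  existT (fun xy : Ob C * Ob C => Hom (fst xy) (snd xy)) (X, Y) f.

Lemma arr_inj (C : Category) (X Y : C) (f g : Hom X Y) : arr f = arr g -> f = g.
Proof. intro H. exact (inj_pair2 _ _ _ _ _ H). Qed.

Lemma arr_objs (C : Category) (X Y X' Y' : C) (f : Hom X Y) (g : Hom X' Y') :
  arr f = arr g -> X = X' /\ Y = Y'.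
Proof. intro H. apply (f_equal (@projT1 _ _)) in H. simpl in H. inversion H; auto. Qed.

Lemma arr_comp (C : Category) (A B D A' B' D' : C) (g : Hom B D) (f : Hom A B)
  (g' : Hom B' D') (f' : Hom A' B') :
  arr g = arr g' -> arr f = arr f' -> arr (comp g f) = arr (comp g' f').
Proof.
  intros Hg Hf. destruct (arr_objs Hg) as [e1 e2], (arr_objs Hf) as [e3 e4].
  subst. apply arr_inj in Hg. apply arr_inj in Hf. subst. reflexivity.
Qed.

Lemma arr_map (S T : Theory) (F : TMor S T) (X Y X' Y' : S) (g : Hom X Y) (g' : Hom X' Y') :
  arr g = arr g' -> arr (fmap F g) = arr (fmap F g').
Proof.
  intro H. destruct (arr_objs H) as [e1 e2]. subst. apply arr_inj in H. subst. reflexivity.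
Qed.

Lemma arr_transport (C : Category) (X Y X' Y' : C) (g : Hom X Y) :
  X' = X -> Y' = Y -> exists h : Hom X' Y', arr h = arr g.
Proof. intros; subst; exists g; reflexivity. Qed.

Lemma is_product_arr (C : Category) (a b p a' b' p' : C) (p1 : Hom p a) (p2 : Hom p b)
  (q1 : Hom p' a') (q2 : Hom p' b') :
  arr p1 = arr q1 -> arr p2 = arr q2 -> is_product p1 p2 -> is_product q1 q2.
Proof.
  intros H1 H2. destruct (arr_objs H1) as [e1 e2], (arr_objs H2) as [e3 e4].
  subst. apply arr_inj in H1. apply arr_inj in H2. subst. auto.
Qed.

Lemma tmor_obj (S T : Theory) (F G : TMor S T) (A : S) : F = G -> F A = G A.
Proof. intro H; subst; reflexivity. Qed.

Lemma tmor_arr (S T : Theory) (F G : TMor S T) (A B : S) (f : Hom A B) :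
  F = G -> arr (fmap F f) = arr (fmap G f).
Proof. intro H; subst; reflexivity. Qed.

Lemma tmor_ext (S T : Theory) (F G : TMor S T) :
  (forall A, F A = G A) ->
  (forall (A B : S) (f : Hom A B), arr (fmap F f) = arr (fmap G f)) -> F = G.
Proof.
  destruct F as [fo fm fi fc ft fp], G as [go gm gi gc gt gp]; simpl; intros Ho Hm.
  assert (fo = go) by (apply functional_extensionality; auto). subst go.
  assert (fm = gm).
  { apply functional_extensionality_dep; intro A.
    apply functional_extensionality_dep; intro B.
    apply functional_extensionality; intro f. apply arr_inj, Hm. }
  subst gm. f_equal; apply proof_irrelevance.
Qed.

Lemma tcomp_assoc (R S T U : Theory) (H : TMor T U) (G : TMor S T) (F : TMor R S) :
  tcomp (tcomp H G) F = tcomp H (tcomp G F).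
Proof. apply tmor_ext; reflexivity. Qed.

Lemma tcomp_id_l (S T : Theory) (F : TMor S T) : tcomp (tid T) F = F.
Proof. apply tmor_ext; reflexivity. Qed.

Lemma product_hom_ext (C : Category) (a b p : C) (p1 : Hom p a) (p2 : Hom p b) (X : C)
  (h h' : Hom X p) :
  is_product p1 p2 -> comp p1 h = comp p1 h' -> comp p2 h = comp p2 h' -> h = h'.
Proof.
  intros P e1 e2. destruct (P X (comp p1 h) (comp p2 h)) as [k [_ [_ U]]].
  rewrite (U h eq_refl eq_refl). symmetry. apply U; auto.
Qed.

Lemma terminal_hom_eq (C : Category) (t X : C) (g g' : Hom X t) : is_terminal t -> g = g'.
Proof. intro H. destruct (H X) as [f Hf]. rewrite (Hf g), (Hf g'). reflexivity. Qed.

Lemma terminal_retract (C : Category) (t t' : C) (m : Hom t t') (n : Hom t' t) :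
  is_terminal t -> comp m n = idm t' -> is_terminal t'.
Proof.
  intros Ht e X. destruct (Ht X) as [f _]. exists (comp m f). intro g.
  rewrite <- (comp_id_l g), <- e, <- comp_assoc. f_equal. apply terminal_hom_eq; auto.
Qed.

Lemma product_retract (C : Category) (a b p p' : C) (p1 : Hom p a) (p2 : Hom p b)
  (p1' : Hom p' a) (p2' : Hom p' b) (m : Hom p p') (n : Hom p' p) :
  is_product p1 p2 -> comp p1' m = p1 -> comp p2' m = p2 ->
  comp p1 n = p1' -> comp p2 n = p2' -> comp m n = idm p' -> is_product p1' p2'.
Proof.
  intros P e1 e2 e3 e4 e5 X f g.
  destruct (P X f g) as [h [h1 [h2 U]]].
  exists (comp m h). split; [|split].
  - rewrite comp_assoc, e1; auto.
  - rewrite comp_assoc, e2; auto.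
  - intros k k1 k2. rewrite <- (comp_id_l k), <- e5, <- comp_assoc. f_equal.
    apply U; rewrite comp_assoc; [rewrite e3 | rewrite e4]; auto.
Qed.

(* A functorial assignment that sends one terminal object (one product cone of [a], [b])
   to a terminal object (a product cone) sends all of them, since they are isomorphic. *)
Section Transfer.
Variables (C D : Category) (Fo : C -> D) (Fm : forall {X Y : C}, Hom X Y -> Hom (Fo X) (Fo Y)).
Hypothesis Fm_id : forall X : C, Fm (idm X) = idm (Fo X).
Hypothesis Fm_comp :
  forall (X Y Z : C) (g : Hom Y Z) (f : Hom X Y), Fm (comp g f) = comp (Fm g) (Fm f).

Lemma terminal_transfer (t t' : C) :
  is_terminal t -> is_terminal (Fo t) -> is_terminal t' -> is_terminal (Fo t').
Proof.
  intros Ht HFt Ht'. destruct (Ht t') as [m _], (Ht' t) as [n _].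
  apply (terminal_retract (m := Fm n) (n := Fm m) HFt).
  rewrite <- Fm_comp, <- Fm_id. f_equal. apply terminal_hom_eq; auto.
Qed.

Lemma product_transfer (a b p p' : C) (p1 : Hom p a) (p2 : Hom p b)
  (q1 : Hom p' a) (q2 : Hom p' b) :
  is_product p1 p2 -> is_product (Fm p1) (Fm p2) -> is_product q1 q2 ->
  is_product (Fm q1) (Fm q2).
Proof.
  intros Hp HFp Hq.
  destruct (Hq p p1 p2) as [m [m1 [m2 _]]], (Hp p' q1 q2) as [n [n1 [n2 _]]].
  assert (mn : comp m n = idm p').
  { apply (product_hom_ext Hq); rewrite comp_assoc, comp_id_r; congruence. }
  apply (product_retract (m := Fm m) (n := Fm n) HFp); rewrite <- Fm_comp; congruence.
Qed.
End Transfer.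

Section FullBijectiveFactorization.
Variables (T V B : Theory) (v : TMor T V) (a : TMor T B).
Hypotheses (v_full : full v) (v_bij : bijective_on_objects v).
Hypothesis a_resp :
  forall (X Y : T) (f f' : Hom X Y), fmap v f = fmap v f' -> fmap a f = fmap a f'.

Definition preimage (y : V) : T :=
  proj1_sig (constructive_indefinite_description _ (proj2 v_bij y)).

Lemma v_preimage (y : V) : v (preimage y) = y.
Proof. exact (proj2_sig (constructive_indefinite_description _ (proj2 v_bij y))). Qed.

Lemma preimage_v (x : T) : preimage (v x) = x.
Proof. apply (proj1 v_bij), v_preimage. Qed.

Lemma lift_hom_exists (y y' : V) (g : Hom y y') :
  exists f : Hom (preimage y) (preimage y'), arr (fmap v f) = arr g.
Proof.
  destruct (arr_transport g (v_preimage y) (v_preimage y')) as [h Hh].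
  destruct (v_full h) as [f Hf]. exists f. rewrite Hf; auto.
Qed.

Definition lift_fmap (y y' : V) (g : Hom y y') : Hom (a (preimage y)) (a (preimage y')) :=
  fmap a (proj1_sig (constructive_indefinite_description _ (lift_hom_exists g))).

Lemma lift_fmap_v (x x' : T) (f : Hom x x') : arr (lift_fmap (fmap v f)) = arr (fmap a f).
Proof.
  unfold lift_fmap. destruct (constructive_indefinite_description _ _) as [f0 Hf0]. simpl.
  generalize (preimage_v x) (preimage_v x'). revert f0 Hf0.
  generalize (preimage (v x)) (preimage (v x')).
  intros z z' f0 Hf0 e e'. subst. apply arr_inj in Hf0. rewrite (a_resp Hf0). reflexivity.
Qed.

Lemma lift_fmap_id (y : V) : lift_fmap (idm y) = idm (a (preimage y)).
Proof.
  destruct (proj2 v_bij y) as [x <-]. apply arr_inj.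
  rewrite <- (fmap_id v x), lift_fmap_v, fmap_id, preimage_v. reflexivity.
Qed.

Lemma lift_fmap_comp (y y' y'' : V) (g : Hom y' y'') (h : Hom y y') :
  lift_fmap (comp g h) = comp (lift_fmap g) (lift_fmap h).
Proof.
  destruct (proj2 v_bij y) as [x <-], (proj2 v_bij y') as [x' <-], (proj2 v_bij y'') as [x'' <-].
  destruct (v_full g) as [f <-], (v_full h) as [k <-]. apply arr_inj.
  rewrite <- fmap_comp, lift_fmap_v, fmap_comp.
  apply arr_comp; symmetry; apply lift_fmap_v.
Qed.

Lemma lift_pres_terminal (y : V) : is_terminal y -> is_terminal (a (preimage y)).
Proof.
  destruct (th_fp T) as [[t Ht] _].
  apply (terminal_transfer (Fo := fun y => a (preimage y)) lift_fmap_id lift_fmap_comp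
           (pres_terminal v Ht)).
  rewrite preimage_v. apply pres_terminal; exact Ht.
Qed.

Lemma lift_pres_product (y1 y2 y : V) (g1 : Hom y y1) (g2 : Hom y y2) :
  is_product g1 g2 -> is_product (lift_fmap g1) (lift_fmap g2).
Proof.
  destruct (proj2 v_bij y1) as [x1 <-], (proj2 v_bij y2) as [x2 <-].
  destruct (proj2 (th_fp T) x1 x2) as [p [pi1 [pi2 Hp]]].
  apply (product_transfer (Fo := fun y => a (preimage y)) lift_fmap_id lift_fmap_comp
           (pres_product (t0 := v) Hp)).
  apply (is_product_arr (p1 := fmap a pi1) (p2 := fmap a pi2));
    [symmetry; apply lift_fmap_v .. | apply pres_product; exact Hp].
Qed.

Definition lift : TMor V B :=
  @Build_TMor V B (fun y => a (preimage y)) (fun y y' g => lift_fmap g) lift_fmap_id lift_fmap_comp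
    lift_pres_terminal lift_pres_product.

Lemma lift_tcomp : tcomp lift v = a.
Proof.
  apply tmor_ext; simpl.
  - intro x. rewrite preimage_v. reflexivity.
  - apply lift_fmap_v.
Qed.

Lemma lift_unique (b : TMor V B) : tcomp b v = a -> b = lift.
Proof.
  intro Hb. apply tmor_ext.
  - intro y. destruct (proj2 v_bij y) as [x <-]. simpl. rewrite preimage_v.
    exact (tmor_obj x Hb).
  - intros y y' g. destruct (proj2 v_bij y) as [x <-], (proj2 v_bij y') as [x' <-].
    destruct (v_full g) as [f <-]. simpl. rewrite lift_fmap_v. exact (tmor_arr f Hb).
Qed.
End FullBijectiveFactorization.

Lemma full_bijective_factor (T V B : Theory) (v : TMor T V) (a : TMor T B) :
  full v -> bijective_on_objects v ->
  (forall (X Y : T) (f f' : Hom X Y), fmap v f = fmap v f' -> fmap a f = fmap a f') ->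
  exists at_ : TMor V B, tcomp at_ v = a /\ forall b : TMor V B, tcomp b v = a -> b = at_.
Proof.
  intros Hfull Hbij Hresp. exists (lift Hfull Hbij Hresp).
  split; [apply lift_tcomp | apply lift_unique].
Qed.

Lemma full_tcomp (R S T : Theory) (G : TMor S T) (F : TMor R S) :
  full G -> full F -> full (tcomp G F).
Proof.
  intros HG HF A B g. destruct (HG _ _ g) as [f' <-], (HF _ _ f') as [f <-]. exists f; reflexivity.
Qed.

Lemma bijective_on_objects_tcomp (R S T : Theory) (G : TMor S T) (F : TMor R S) :
  bijective_on_objects G -> bijective_on_objects F -> bijective_on_objects (tcomp G F).
Proof.
  intros [GI GS] [FI FS]. split.
  - intros x y H. apply FI, GI, H.
  - intro z. destruct (GS z) as [y <-], (FS y) as [x <-]. exists x; reflexivity.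
Qed.

Section Isomorphism.
Variables (W V : Theory) (s : TMor W V) (t : TMor V W).
Hypotheses (ts_id : tcomp t s = tid W) (st_id : tcomp s t = tid V).

Lemma iso_full : full s.
Proof.
  intros A B g.
  destruct (arr_transport (fmap t g) (eq_sym (tmor_obj A ts_id)) (eq_sym (tmor_obj B ts_id)))
    as [h Hh].
  exists h. apply arr_inj. transitivity (arr (fmap s (fmap t g))).
  - exact (arr_map s Hh).
  - exact (tmor_arr g st_id).
Qed.

Lemma iso_bijective_on_objects : bijective_on_objects s.
Proof.
  split.
  - intros x y H. pose proof (tmor_obj x ts_id) as ex. pose proof (tmor_obj y ts_id) as ey.
    simpl in ex, ey. rewrite <- ex, <- ey, H. reflexivity.
  - intro y. exists (t y). exact (tmor_obj y st_id).
Qed.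
End Isomorphism.

Lemma general_cosolution_endo_id (A V : Theory) (E : Cosystem A) (v : TMor A V) (u : TMor V V) :
  is_general_cosolution E v -> tcomp u v = v -> u = tid V.
Proof.
  intros [Hv Huniq] Hu. destruct (Huniq V v Hv) as [w [_ Hw]].
  rewrite (Hw u Hu), (Hw (tid V)); [reflexivity | apply tcomp_id_l].
Qed.

Lemma general_cosolution_iso (A V W : Theory) (E : Cosystem A) (v : TMor A V) (w : TMor A W) :
  is_general_cosolution E v -> is_general_cosolution E w ->
  exists (s : TMor W V) (t : TMor V W),
    tcomp s w = v /\ tcomp t s = tid W /\ tcomp s t = tid V.
Proof.
  intros Hv Hw.
  destruct (proj2 Hw V v (proj1 Hv)) as [s [Hs _]].
  destruct (proj2 Hv W w (proj1 Hw)) as [t [Ht _]].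
  exists s, t. split; [exact Hs | split].
  - apply (general_cosolution_endo_id Hw). rewrite tcomp_assoc, Hs. exact Ht.
  - apply (general_cosolution_endo_id Hv). rewrite tcomp_assoc, Ht. exact Hs.
Qed.

Section Quotient.
Variables (T : Theory) (gen : forall X Y : T, Hom X Y -> Hom X Y -> Prop).

(* The last rule is what lets the quotient keep the finite products of [T]. *)
Inductive cong : forall X Y : T, Hom X Y -> Hom X Y -> Prop :=
| cong_gen : forall (X Y : T) (f g : Hom X Y), gen f g -> cong f g
| cong_refl : forall (X Y : T) (f : Hom X Y), cong f f
| cong_sym : forall (X Y : T) (f g : Hom X Y), cong f g -> cong g f
| cong_trans : forall (X Y : T) (f g h : Hom X Y),
    cong f g -> cong g h -> cong f h
| cong_compl : forall (X Y Z : T) (g : Hom Y Z) (f f' : Hom X Y),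
    cong f f' -> cong (comp g f) (comp g f')
| cong_compr : forall (X Y Z : T) (g g' : Hom Y Z) (f : Hom X Y),
    cong g g' -> cong (comp g f) (comp g' f)
| cong_product : forall (a b p X : T) (p1 : Hom p a) (p2 : Hom p b) (h h' : Hom X p),
    is_product p1 p2 -> cong (comp p1 h) (comp p1 h') ->
    cong (comp p2 h) (comp p2 h') -> cong h h'.

Lemma cong_comp (X Y Z : T) (g g' : Hom Y Z) (f f' : Hom X Y) :
  cong f f' -> cong g g' -> cong (comp g f) (comp g' f').
Proof. intros; eapply cong_trans; [apply cong_compl; eauto | apply cong_compr; auto]. Qed.

Lemma cong_resp (B : Theory) (a : TMor T B) :
  (forall X Y (f g : Hom X Y), gen f g -> fmap a f = fmap a g) ->
  forall X Y (f g : Hom X Y), cong f g -> fmap a f = fmap a g.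
Proof.
  intros Hg X Y f g H. induction H; try congruence.
  - auto.
  - rewrite !fmap_comp; congruence.
  - rewrite !fmap_comp; congruence.
  - apply (product_hom_ext (pres_product (t0 := a) H)); rewrite <- !fmap_comp; auto.
Qed.

Definition QHom (X Y : T) := {c : Hom X Y -> Prop | exists f, c = cong f}.

Definition qclass (X Y : T) (f : Hom X Y) : QHom X Y := exist _ (cong f) (ex_intro _ f eq_refl).

Definition qrep (X Y : T) (c : QHom X Y) : Hom X Y :=
  proj1_sig (constructive_indefinite_description _ (proj2_sig c)).

Lemma qhom_ext (X Y : T) (c d : QHom X Y) : proj1_sig c = proj1_sig d -> c = d.
Proof. destruct c, d; simpl; intro; subst; f_equal; apply proof_irrelevance. Qed.

Lemma qclass_rep (X Y : T) (c : QHom X Y) : qclass (qrep c) = c.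
Proof.
  apply qhom_ext. symmetry.
  exact (proj2_sig (constructive_indefinite_description _ (proj2_sig c))).
Qed.

Lemma qclass_eq (X Y : T) (f g : Hom X Y) : cong f g -> qclass f = qclass g.
Proof.
  intro H. apply qhom_ext; simpl.
  apply functional_extensionality; intro h. apply propositional_extensionality. split; intro K.
  - eapply cong_trans; [apply cong_sym, H | exact K].
  - eapply cong_trans; [exact H | exact K].
Qed.

Lemma qclass_inj (X Y : T) (f g : Hom X Y) : qclass f = qclass g -> cong f g.
Proof.
  intro H. apply (f_equal (@proj1_sig _ _)) in H. simpl in H.
  rewrite (equal_f H). apply cong_refl.
Qed.

Definition qcomp (A B D : T) (g : QHom B D) (f : QHom A B) : QHom A D :=
  qclass (comp (qrep g) (qrep f)).

Lemma qcomp_class (A B D : T) (g : Hom B D) (f : Hom A B) :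
  qcomp (qclass g) (qclass f) = qclass (comp g f).
Proof.
  apply qclass_eq, cong_comp; apply qclass_inj; rewrite qclass_rep; reflexivity.
Qed.

Definition quotient_category : Category.
Proof.
  refine (@Build_Category (Ob T) QHom (fun A => qclass (idm A)) qcomp _ _ _).
  - intros A B f. rewrite <- (qclass_rep f), qcomp_class, comp_id_l. reflexivity.
  - intros A B f. rewrite <- (qclass_rep f), qcomp_class, comp_id_r. reflexivity.
  - intros A B D E h g f.
    rewrite <- (qclass_rep f), <- (qclass_rep g), <- (qclass_rep h), !qcomp_class, comp_assoc.
    reflexivity.
Defined.

Lemma arr_qclass (X Y X' Y' : T) (g : Hom X Y) (g' : Hom X' Y') :
  X = X' -> Y = Y' -> (forall h : Hom X Y, arr h = arr g' -> cong g h) ->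
  @arr quotient_category X Y (qclass g) = @arr quotient_category X' Y' (qclass g').
Proof. intros eX eY H. subst. f_equal. apply qclass_eq, H. reflexivity. Qed.

Lemma qclass_pres_terminal (t : T) : is_terminal t -> @is_terminal quotient_category t.
Proof.
  intros Ht X. destruct (Ht X) as [f _]. exists (qclass f). intro g.
  rewrite <- (qclass_rep g). f_equal. apply terminal_hom_eq; auto.
Qed.

Lemma qclass_pres_product (a b p : T) (p1 : Hom p a) (p2 : Hom p b) :
  is_product p1 p2 -> @is_product quotient_category a b p (qclass p1) (qclass p2).
Proof.
  intros Hp X f g. destruct (Hp X (qrep f) (qrep g)) as [h [h1 [h2 _]]].
  exists (qclass h). simpl. repeat split.
  - rewrite qcomp_class, h1, qclass_rep; auto.
  - rewrite qcomp_class, h2, qclass_rep; auto.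
  - intros k k1 k2. rewrite <- (qclass_rep k) in *. rewrite qcomp_class in k1, k2.
    apply qclass_eq, (cong_product Hp); apply qclass_inj.
    + rewrite k1, h1, qclass_rep; auto.
    + rewrite k2, h2, qclass_rep; auto.
Qed.

Definition quotient_theory : Theory.
Proof.
  refine (@Build_Theory quotient_category _).
  destruct (th_fp T) as [[t Ht] Hp]. split.
  - exists t. apply qclass_pres_terminal; auto.
  - intros a b. destruct (Hp a b) as [p [p1 [p2 H]]].
    exists p, (qclass p1), (qclass p2). apply qclass_pres_product; auto.
Defined.

Definition quotient_map : TMor T quotient_theory.
Proof.
  refine (@Build_TMor T quotient_theory (fun A => A) qclass _ _ _ _).
  - intros; reflexivity.
  - intros. symmetry. apply qcomp_class.
  - apply qclass_pres_terminal.
  - apply qclass_pres_product.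
Defined.

Lemma quotient_map_full : full quotient_map.
Proof. intros A B g. exists (qrep g). apply qclass_rep. Qed.

Lemma quotient_map_bijective_on_objects : bijective_on_objects quotient_map.
Proof. split; [intros x y H; exact H | intro y; exists y; reflexivity]. Qed.

Lemma quotient_map_factor (B : Theory) (a : TMor T B) :
  (forall X Y (f g : Hom X Y), gen f g -> fmap a f = fmap a g) ->
  exists at_ : TMor quotient_theory B,
    tcomp at_ quotient_map = a /\ forall b, tcomp b quotient_map = a -> b = at_.
Proof.
  intro Ha. apply full_bijective_factor;
    [apply quotient_map_full | apply quotient_map_bijective_on_objects |].
  intros X Y f f' H. apply (cong_resp Ha), qclass_inj, H.
Qed.
End Quotient.

(* [P f] and [Q f] have endpoints that are only propositionally equal. *)
Definition cosystem_relation (A : Theory) (E : Cosystem A)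
  : forall X Y : A, Hom X Y -> Hom X Y -> Prop :=
  fun X Y g g' => exists i (A0 B0 : @cs_dom A E i) (f : Hom A0 B0),
    arr g = arr (fmap (@cs_P A E i) f) /\ arr g' = arr (fmap (@cs_Q A E i) f).

Lemma lawvere_equation_obj (T' T : Theory) (P Q : TMor T' T) :
  is_Lawvere_equation P Q -> forall y, P y = Q y.
Proof. intros [T'' [U [HU He]]] y. destruct (HU y) as [x <-]. exact (tmor_obj x He). Qed.

Lemma quotient_general_cosolution (A : Theory) (E : Cosystem A) :
  is_Lawvere_cosystem E -> is_general_cosolution E (quotient_map (cosystem_relation E)).
Proof.
  intro HL. split.
  - intro i. pose proof (lawvere_equation_obj (HL i)) as HPQ. apply tmor_ext; [exact HPQ |].
    intros A0 B0 f. apply arr_qclass; [apply HPQ .. |].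
    intros h Hh. apply cong_gen. exists i, A0, B0, f. auto.
  - intros B a Ha. apply quotient_map_factor.
    intros X Y g g' [i [A0 [B0 [f [e1 e2]]]]]. apply arr_inj.
    rewrite (arr_map a e1), (arr_map a e2). exact (tmor_arr f (Ha i)).
Qed.

Lemma covariety_full_bijective (T V : Theory) (v : TMor T V) :
  is_Lawvere_covariety v -> full v /\ bijective_on_objects v.
Proof.
  intros [E [HL Hv]].
  destruct (general_cosolution_iso Hv (quotient_general_cosolution HL))
    as [s [t [Hs [Hts Hst]]]]. subst v.
  split.
  - apply full_tcomp; [exact (iso_full Hts Hst) | apply quotient_map_full].
  - apply bijective_on_objects_tcomp;
      [exact (iso_bijective_on_objects Hts Hst) | apply quotient_map_bijective_on_objects].
Qed.

Section KernelPair.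
Variables (T V : Theory) (v : TMor T V).

Definition KHom (A B : T) := {fg : Hom A B * Hom A B | fmap v (fst fg) = fmap v (snd fg)}.

Lemma khom_eq (A B : T) (x y : KHom A B) : proj1_sig x = proj1_sig y -> x = y.
Proof. destruct x, y; simpl; intro; subst; f_equal; apply proof_irrelevance. Qed.

Definition kdiag (A B : T) (f : Hom A B) : KHom A B := exist _ (f, f) eq_refl.

Definition kcomp (A B D : T) (g : KHom B D) (f : KHom A B) : KHom A D.
Proof.
  refine (exist _ (comp (fst (proj1_sig g)) (fst (proj1_sig f)),
                   comp (snd (proj1_sig g)) (snd (proj1_sig f))) _).
  simpl. rewrite !fmap_comp, (proj2_sig g), (proj2_sig f). reflexivity.
Defined.

Definition kernel_pair_category : Category.
Proof.
  refine (@Build_Category (Ob T) KHom (fun A => kdiag (idm A)) kcomp _ _ _).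
  - intros A B f. apply khom_eq. simpl. rewrite !comp_id_l. destruct (proj1_sig f); reflexivity.
  - intros A B f. apply khom_eq. simpl. rewrite !comp_id_r. destruct (proj1_sig f); reflexivity.
  - intros A B D E h g f. apply khom_eq. simpl. rewrite !comp_assoc. reflexivity.
Defined.

Lemma kdiag_pres_terminal (t : T) : is_terminal t -> @is_terminal kernel_pair_category t.
Proof.
  intros Ht X. destruct (Ht X) as [f _]. exists (kdiag f). intro g. apply khom_eq. simpl.
  destruct (proj1_sig g) as [g1 g2]. f_equal; apply terminal_hom_eq; auto.
Qed.

Lemma kdiag_pres_product (a b p : T) (p1 : Hom p a) (p2 : Hom p b) :
  is_product p1 p2 -> @is_product kernel_pair_category a b p (kdiag p1) (kdiag p2).
Proof.
  intros Hp X [[f1 f2] ef] [[g1 g2] eg]. simpl in ef, eg.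
  destruct (Hp X f1 g1) as [h [h1 [h2 U]]], (Hp X f2 g2) as [h' [h1' [h2' U']]].
  assert (eh : fmap v h = fmap v h').
  { apply (product_hom_ext (pres_product (t0 := v) Hp)); rewrite <- !fmap_comp; congruence. }
  exists (exist _ (h, h') eh). split; [|split].
  - apply khom_eq; simpl. congruence.
  - apply khom_eq; simpl. congruence.
  - intros [[k k'] ek] k1 k2. apply khom_eq. simpl.
    apply (f_equal (@proj1_sig _ _)) in k1, k2. simpl in k1, k2.
    injection k1 as k11 k12. injection k2 as k21 k22. f_equal; auto.
Qed.

Definition kernel_pair_theory : Theory.
Proof.
  refine (@Build_Theory kernel_pair_category _).
  destruct (th_fp T) as [[t Ht] Hp]. split.
  - exists t. apply kdiag_pres_terminal; auto.
  - intros a b. destruct (Hp a b) as [p [p1 [p2 H]]].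
    exists p, (kdiag p1), (kdiag p2). apply kdiag_pres_product; auto.
Defined.

Definition kernel_diag : TMor T kernel_pair_theory.
Proof.
  refine (@Build_TMor T kernel_pair_theory (fun A => A) kdiag _ _ _ _).
  - reflexivity.
  - intros; apply khom_eq; reflexivity.
  - apply kdiag_pres_terminal.
  - apply kdiag_pres_product.
Defined.

Definition kpick (b : bool) (A B : T) (f : KHom A B) : Hom A B :=
  if b then fst (proj1_sig f) else snd (proj1_sig f).

Lemma kpick_id (b : bool) (A : T) : kpick b (kdiag (idm A)) = idm A.
Proof. destruct b; reflexivity. Qed.

Lemma kpick_comp (b : bool) (A B D : T) (g : KHom B D) (f : KHom A B) :
  kpick b (kcomp g f) = comp (kpick b g) (kpick b f).
Proof. destruct b; reflexivity. Qed.

Lemma kpick_diag (b : bool) (A B : T) (f : Hom A B) : kpick b (kdiag f) = f.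
Proof. destruct b; reflexivity. Qed.

(* Every terminal object and product cone of the kernel-pair theory is isomorphic to the
   diagonal image of one in [T], which each projection sends back to itself. *)
Definition kernel_proj (b : bool) : TMor kernel_pair_theory T.
Proof.
  refine (@Build_TMor kernel_pair_theory T (fun A => A) (fun A B f => kpick b f)
            (kpick_id b) (kpick_comp b) _ _).
  - intros t' Ht'. destruct (proj1 (th_fp T)) as [t Ht].
    apply (@terminal_transfer kernel_pair_category T (fun A => A) (fun A B f => kpick b f)
             (kpick_id b) (kpick_comp b) t);
      [apply kdiag_pres_terminal; exact Ht | exact Ht | exact Ht'].
  - intros a c p' q1 q2 Hq. destruct (proj2 (th_fp T) a c) as [p [p1 [p2 Hp]]].
    apply (@product_transfer kernel_pair_category T (fun A => A) (fun A B f => kpick b f)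
             (kpick_id b) (kpick_comp b) a c p p' (kdiag p1) (kdiag p2));
      [apply kdiag_pres_product; exact Hp | rewrite !kpick_diag; exact Hp | exact Hq].
Defined.

Lemma kernel_proj_diag (b : bool) : tcomp (kernel_proj b) kernel_diag = tid T.
Proof. apply tmor_ext; [reflexivity | intros; simpl; rewrite kpick_diag; reflexivity]. Qed.

Lemma kernel_pair_reflexive : is_reflexive_pair (kernel_proj true) (kernel_proj false).
Proof. exists kernel_diag. split; apply kernel_proj_diag. Qed.

Lemma kernel_pair_Lawvere : is_Lawvere_equation (kernel_proj true) (kernel_proj false).
Proof.
  exists T, kernel_diag. split.
  - intro y; exists y; reflexivity.
  - rewrite !kernel_proj_diag. reflexivity.
Qed.

Lemma kernel_pair_coequalizer :
  full v -> bijective_on_objects v -> is_coequalizer (kernel_proj true) (kernel_proj false) v.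
Proof.
  intros Hfull Hbij. split.
  - apply tmor_ext; [reflexivity |]. intros A B f. simpl. f_equal. exact (proj2_sig f).
  - intros B a Ha. apply full_bijective_factor; auto. intros X Y f f' H.
    exact (arr_inj (@tmor_arr kernel_pair_theory B _ _ X Y (exist _ (f, f') H) Ha)).
Qed.
End KernelPair.

Definition pair_cosystem (T' T : Theory) (P Q : TMor T' T) : Cosystem T :=
  {| cs_index := unit; cs_nonempty := inhabits tt; cs_dom := fun _ => T';
     cs_P := fun _ => P; cs_Q := fun _ => Q |}.

Lemma coequalizer_general_cosolution (T' T V : Theory) (P Q : TMor T' T) (v : TMor T V) :
  is_coequalizer P Q v -> is_general_cosolution (pair_cosystem P Q) v.
Proof.
  intros [Hv Huniq]. split.
  - intro i. exact Hv.
  - intros B a Ha. exact (Huniq B a (Ha tt)).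
Qed.

Theorem mainTheorem13 :
  (forall (A : Theory) (E : Cosystem A), is_Lawvere_cosystem E ->
     exists (V : Theory) (v : TMor A V), is_general_cosolution E v) /\
  (forall (T V : Theory) (v : TMor T V),
     is_Lawvere_covariety v <-> (full v /\ bijective_on_objects v)) /\
  (forall (T V : Theory) (v : TMor T V), is_Lawvere_covariety v ->
     exists (T' : Theory) (P Q : TMor T' T),
       is_reflexive_pair P Q /\ is_Lawvere_equation P Q /\ is_coequalizer P Q v).
Proof.
  split; [|split].
  - intros A E HL. exists _, (quotient_map (cosystem_relation E)).
    exact (quotient_general_cosolution HL).
  - intros T V v. split; [apply covariety_full_bijective |].
    intros [Hfull Hbij]. exists (pair_cosystem (kernel_proj v true) (kernel_proj v false)).
    split.
    + intro i. apply kernel_pair_Lawvere.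
    + apply coequalizer_general_cosolution, kernel_pair_coequalizer; assumption.
  - intros T V v Hv. destruct (covariety_full_bijective Hv) as [Hfull Hbij].
    exists _, (kernel_proj v true), (kernel_proj v false).
    split; [apply kernel_pair_reflexive | split; [apply kernel_pair_Lawvere |]].
    apply kernel_pair_coequalizer; assumption.
Qed.
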